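(* Let $x>3$ be an integer and let $\varepsilon:=s^-(3)$. Then $$\varepsilon+\log(2)\Big(\frac13+\frac14+\cdots+\frac1{x-1}\Big)\;\le\;s^-(x)\;\le\;\log(x-1).$$
   Context: A square is a nonempty word of the form $uu$; a word is square-free if no contiguous subword of it is a square. $\omega_n^-(x)$ is the number of square-free words of length $n$ over an $x$-letter alphabet and $s^-(x)=\lim_{n\to\infty}\frac1n\log\omega_n^-(x)$ (this limit exists). *)

From Stdlib Require Import Reals.
From Coquelicot Require Import Coquelicot.
From mathcomp Require Import all_boot.

Set Implicit Arguments.
Unset Strict Implicit.
Unset Printing Implicit Defensive.

Definition is_square {T : eqType} (v : seq T) : bool :=
  [&& (0 < size v)%N, ~~ odd (size v) & take (size v)./2 v == drop (size v)./2 v].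

Definition square_free {T : eqType} (w : seq T) : bool :=
  [forall i : 'I_(size w).+1, forall j : 'I_(size w).+1,
     (i <= j)%N ==> ~~ is_square (take (j - i)%N (drop i w))].

Definition omega_minus (n x : nat) : nat :=
  #|[set w : n.-tuple 'I_x | square_free (tval w)]|.

Definition s_minus (x : nat) : R :=
  real (Lim_seq (fun n => (ln (INR (omega_minus n x)) / INR n)%R)).

(* Upper bound: deleting the first letter of a square-free word of length n + 2 leaves a
   square-free word whose first letter differs from the deleted one, so
   omega_(n+1)(x) <= x (x - 1)^n.

   Lower bound: s^-(x + 1) >= s^-(x) + ln (1 + 1/x) >= s^-(x) + ln 2 / x.  Inserting a new
   letter after some letters of a square-free word over x letters, never twice in a row,
   keeps it square-free.  By Fekete's lemma omega_m(x) >= lam^m with lam = e^(s^-(x)), so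
   summing over the insertion patterns of total length n gives a weight W_n with
   W_(n+2) = lam (W_(n+1) + W_n), which grows like (lam (1 + 1/x))^n because
   lam <= x - 1.  The step applies from x = 3 when square-free ternary words of every
   length exist; otherwise s^-(3) = 0 and it suffices that omega_n(4) >= 2^n, which follows
   from counting the one-letter extensions of square-free words that end in a square. *)

From Stdlib Require Import Reals Lra Lia Classical.
From Coquelicot Require Import Coquelicot.
From mathcomp Require Import all_boot zify.

Set Implicit Arguments.
Unset Strict Implicit.
Unset Printing Implicit Defensive.
Local Open Scope nat_scope.

Section SquareFreeWords.
Variable T : eqType.
Implicit Types s p q u v w : seq T.

Lemma is_squareP v : reflect (exists2 u, u != [::] & v = u ++ u) (is_square v).
Proof.
apply: (iffP idP) => [|[u hu ->]].
  case/and3P=> hv hodd /eqP he; exists (take (size v)./2 v); last first.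
    by rewrite {2}he cat_take_drop.
  rewrite -size_eq0 size_take; case: ltnP => _; last by rewrite -lt0n.
  by rewrite -lt0n; move: hv hodd; case: (size v) => // [[|n]].
rewrite /is_square size_cat addnn odd_double half_double.
rewrite take_size_cat // drop_size_cat // eqxx !andbT.
by rewrite -addnn addn_gt0 lt0n size_eq0 hu.
Qed.

Lemma cat_take_infix_drop s i j : i <= j ->
  s = take i s ++ take (j - i) (drop i s) ++ drop j s.
Proof.
move=> hij; rewrite -[in LHS](cat_take_drop i s); congr (_ ++ _).
by rewrite -[in LHS](cat_take_drop (j - i) (drop i s)) drop_drop subnK.
Qed.

Lemma square_infixP s :
  reflect (exists p u q, u != [::] /\ s = p ++ u ++ u ++ q) (~~ square_free s).
Proof.
rewrite negb_forall; apply: (iffP existsP) => [[i] | [p [u [q [hu ->]]]]].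
  rewrite negb_forall => /existsP [j]; rewrite negb_imply negbK.
  case/andP=> hij /is_squareP [u hu he]; exists (take i s), u, (drop j s).
  by split; rewrite // (catA u u) -he -cat_take_infix_drop.
set w := p ++ u ++ u ++ q.
have hi : size p < (size w).+1 by rewrite size_cat ltnS leq_addr.
have hj : size p + (size u + size u) < (size w).+1.
  by rewrite !size_cat ltnS !addnA leq_addr.
exists (Ordinal hi); rewrite negb_forall; apply/existsP; exists (Ordinal hj).
rewrite negb_imply leq_addr negbK /=; apply/is_squareP; exists u => //.
by rewrite addKn drop_size_cat // catA take_size_cat // size_cat.
Qed.

Lemma square_freeP s :
  reflect (forall p u q, s = p ++ u ++ u ++ q -> u = [::]) (square_free s).
Proof.
apply: (iffP idP) => [sf p u q hs | H].
  apply/eqP; apply: contraTT sf => hu; apply/square_infixP; by exists p, u, q.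
by apply: contraT => /square_infixP [p [u [q [hu /H hu0]]]]; rewrite hu0 in hu.
Qed.

Lemma square_free_infix p s q : square_free (p ++ s ++ q) -> square_free s.
Proof.
move/square_freeP=> H; apply/square_freeP=> p' u q' hs.
by apply: (H (p ++ p') u (q' ++ q)); rewrite hs -!catA.
Qed.

Lemma square_free_take n s : square_free s -> square_free (take n s).
Proof.
by move=> sf; apply: (@square_free_infix [::] _ (drop n s)); rewrite cat_take_drop.
Qed.

Lemma square_free_drop n s : square_free s -> square_free (drop n s).
Proof.
by move=> sf; apply: (@square_free_infix (take n s) _ [::]); rewrite cats0 cat_take_drop.
Qed.

Definition square_suffix j s :=
  [&& 0 < j, j + j <= size s & take j (drop (size s - (j + j)) s) == drop (size s - j) s].

Lemma square_suffix_cat p u : u != [::] -> square_suffix (size u) (p ++ u ++ u).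
Proof.
move=> hu; rewrite /square_suffix lt0n size_eq0 hu !size_cat leq_addl /=.
rewrite addnK drop_size_cat // take_size_cat //.
have -> : size p + (size u + size u) - size u = size (p ++ u).
  by rewrite size_cat addnA addnK.
by rewrite catA drop_size_cat.
Qed.

Lemma square_suffixE j s : square_suffix j s ->
  s = take (size s - j) s ++ drop (size s - (j + j)) (take (size s - j) s).
Proof.
case/and3P=> _ hjj /eqP he; rewrite -[in LHS](cat_take_drop (size s - j) s).
congr (_ ++ _); rewrite -he take_drop; congr (drop _ (take _ _)); lia.
Qed.

Lemma rcons_square_suffix w c : square_free w -> ~~ square_free (rcons w c) ->
  exists2 j, j < size w & square_suffix j.+1 (rcons w c).
Proof.
move=> sfw /square_infixP [p [u [q [hu he]]]].
case/lastP: q he => [|q d] he; last first.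
  rewrite -!rcons_cat in he; case/rcons_inj: he => he _.
  by move/square_freeP: sfw => /(_ p u q he) hu0; rewrite hu0 in hu.
have u_gt0 : 0 < size u by rewrite lt0n size_eq0.
exists (size u).-1; last by rewrite prednK // he cats0 square_suffix_cat.
by move/(congr1 size): he; rewrite size_rcons !size_cat /= addn0; lia.
Qed.

End SquareFreeWords.

Lemma card_bigcup_le (T : finType) n (F : nat -> {set T}) :
  #|\bigcup_(j < n) F j| <= \sum_(j < n) #|F j|.
Proof.
elim: n => [|n IH]; first by rewrite !big_ord0 cards0.
rewrite !big_ord_recr /= cardsU; apply: leq_trans (leq_subr _ _) _.
by rewrite leq_add2r.
Qed.

Lemma leq_card_in_inj (aT bT : finType) (A : {set aT}) (B : {set bT}) (f : aT -> bT) :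
  {in A &, injective f} -> {in A, forall a, f a \in B} -> #|A| <= #|B|.
Proof.
move=> injf fAB; rewrite -(card_in_imset injf); apply: subset_leq_card.
by apply/subsetP=> b /imsetP [a ha ->]; apply: fAB.
Qed.

Section SquareFreeCount.
Variable T : finType.

Definition sf_count n := #|[set w : n.-tuple T | square_free w]|.

Lemma sf_count0 : sf_count 0 = 1.
Proof.
rewrite /sf_count (_ : [set w | _] = [set [tuple]]) ?cards1 //.
apply/setP=> t; rewrite !inE tuple0 eqxx; apply/square_freeP=> p u q.
by move/(congr1 size); rewrite /= !size_cat; case: u => //= a u; rewrite addnS.
Qed.

Lemma sf_countD_le m n : sf_count (m + n) <= sf_count m * sf_count n.
Proof.
rewrite /sf_count -cardsX.
have e1 : minn m (m + n) = m by apply/minn_idPl; apply: leq_addr.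
have e2 : m + n - m = n by rewrite addKn.
apply: (@leq_card_in_inj _ _ _ _ (fun t : (m + n).-tuple T =>
   (tcast e1 [tuple of take m t], tcast e2 [tuple of drop m t]))).
  move=> t1 t2 _ _ [] /(congr1 val) /= + /(congr1 val) /=.
  rewrite !val_tcast /= => h1 h2; apply: val_inj => /=.
  by rewrite -(cat_take_drop m t1) h1 h2 cat_take_drop.
move=> t; rewrite !inE /= !val_tcast /= => sft.
by rewrite square_free_take ?square_free_drop.
Qed.

(* Deleting the first letter is injective on words, and the deleted letter differs from
   the new first letter. *)
Lemma sf_countSS_le n : sf_count n.+2 <= #|T|.-1 * sf_count n.+1.
Proof.
pose S := [set p : n.+1.-tuple T * T | square_free p.1 && (p.2 != thead p.1)].
have -> : #|T|.-1 * sf_count n.+1 = #|S|.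
  have -> : #|S| = \sum_(w : n.+1.-tuple T) \sum_(c : T) ((w, c) \in S : nat).
    by rewrite pair_big /= -sum1_card big_mkcond /=; apply: eq_bigr; case.
  rewrite /sf_count -sum1_card big_mkcond big_distrr /=; apply: eq_bigr => w _.
  rewrite inE; case sfw: (square_free w) => /=.
    rewrite muln1 -(cardC1 (thead w)) -sum1_card big_mkcond /=.
    by apply: eq_bigr => c _; rewrite !inE /= sfw.
  by rewrite muln0 big1 // => c _; rewrite inE /= sfw.
apply: (@leq_card_in_inj _ _ _ _ (fun t : n.+2.-tuple T => ([tuple of behead t], thead t))).
  move=> t1 t2 _ _ [] h1 h2; apply: val_inj.
  by rewrite (tuple_eta t1) (tuple_eta t2) /= h2 h1.
move=> t; rewrite !inE /= => sft; apply/andP; split.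
  by have := square_free_drop 1 sft; rewrite drop1.
case: t sft => [[|a [|b s]] //= size_t] sft.
rewrite /thead (tnth_nth a) /= (tnth_nth a) /=; apply/eqP=> hab; subst b.
by move/square_freeP: sft => /(_ [::] [:: a] s erefl).
Qed.

(* Such an extension is determined by its prefix of length [n - j], which is square-free. *)
Lemma card_square_suffix_le n j :
  #|[set p : n.-tuple T * T | square_free p.1 && square_suffix j.+1 (rcons p.1 p.2)]|
    <= sf_count (n - j).
Proof.
have e1 : minn (n - j) n.+1 = n - j by apply/minn_idPl; rewrite leqW // leq_subr.
apply: (@leq_card_in_inj _ _ _ _ (fun p : n.-tuple T * T =>
     tcast e1 [tuple of take (n - j) (rcons p.1 p.2)])).
  move=> [w1 c1] [w2 c2]; rewrite !inE /= => /andP [_ h1] /andP [_ h2].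
  move/(congr1 val); rewrite /= !val_tcast /= => ht.
  suff : rcons w1 c1 = rcons w2 c2 by case/rcons_inj => /val_inj -> ->.
  rewrite (square_suffixE h1) (square_suffixE h2) !size_rcons !size_tuple.
  by rewrite -[n.+1 - j.+1]/(n - j) ht.
move=> [w c]; rewrite !inE /= val_tcast /= => /andP [sfw _].
rewrite -cats1 takel_cat ?size_tuple ?leq_subr //; exact: square_free_take.
Qed.

Lemma card_extend_le n :
  #|T| * sf_count n <= sf_count n.+1 + \sum_(j < n.+1) sf_count (n - j).
Proof.
pose P := [set p : n.-tuple T * T | square_free p.1].
pose G := [set p : n.-tuple T * T | square_free (rcons p.1 p.2)].
pose B j := [set p : n.-tuple T * T | square_free p.1 && square_suffix j.+1 (rcons p.1 p.2)].
have -> : #|T| * sf_count n = #|P|.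
  by rewrite mulnC /sf_count -cardsT -cardsX; apply: eq_card => -[w c]; rewrite !inE andbT.
rewrite -(cardsID G P) leq_add //.
  apply: (@leq_card_in_inj _ _ _ _ (fun p : n.-tuple T * T => [tuple of rcons p.1 p.2])).
    move=> [w1 c1] [w2 c2] _ _ /(congr1 val) /= /rcons_inj [/val_inj -> ->] //.
  by move=> [w c]; rewrite !inE /= => /andP [].
have PDG : P :\: G \subset \bigcup_(j < n.+1) B j.
  apply/subsetP => -[w c]; rewrite !inE /= => /andP [hG sfw].
  have [j hj hs] := rcons_square_suffix sfw hG; rewrite size_tuple in hj.
  by apply/bigcupP; exists (Ordinal (leqW hj)); rewrite // inE sfw.
apply: leq_trans (subset_leq_card PDG) _; apply: leq_trans (card_bigcup_le _ _) _.
by apply: leq_sum => j _; apply: card_square_suffix_le.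
Qed.

(* The invariant [\sum_(i <= n) S_i <= 2 S_n] turns [card_extend_le] into
   [2 S_n <= S_(n+1)]. *)
Lemma sf_count_ge_exp2 : 4 <= #|T| -> forall n, 2 ^ n <= sf_count n.
Proof.
move=> hT n.
suff [] : \sum_(j < n.+1) sf_count (n - j) <= 2 * sf_count n /\ 2 ^ n <= sf_count n by [].
elim: n => [|n [IHsum IHexp]]; first by rewrite big_ord1 sf_count0.
have hext := card_extend_le n.
have h4 : 4 * sf_count n <= #|T| * sf_count n by rewrite leq_mul2r hT orbT.
have hdouble : 2 * sf_count n <= sf_count n.+1 by lia.
split; last by rewrite expnS (leq_trans _ hdouble) // leq_mul2l IHexp orbT.
rewrite big_ord_recl subn0 /=; under eq_bigr do rewrite subSS.
by apply: leq_trans (leq_add (leqnn _) IHsum) _; lia.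
Qed.

End SquareFreeCount.

Lemma sum_card_fibres_le (aT : finType) (I : eqType) (f : aT -> I) (A : {set aT})
    (r : seq I) :
  uniq r -> \sum_(i <- r) #|[set x in A | f x == i]| <= #|A|.
Proof.
move=> ur; have -> : \sum_(i <- r) #|[set x in A | f x == i]| = \sum_(x in A) count_mem (f x) r.
  under eq_bigr do rewrite -sum1_card big_mkcond /=.
  rewrite exchange_big /= [RHS]big_mkcond; apply: eq_bigr => x _.
  rewrite -sum1_count big_mkcond /=.
  case: (boolP (x \in A)) => xA; last by rewrite big1 // => i _; rewrite inE (negbTE xA).
  by rewrite [RHS]big_mkcond; apply: eq_bigr => i _; rewrite inE xA eq_sym.
rewrite -sum1_card leq_sum // => x _; rewrite count_uniq_mem //; exact: leq_b1.
Qed.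

Lemma is_square_map (T U : eqType) (f : T -> U) (v : seq T) :
  injective f -> is_square (map f v) = is_square v.
Proof.
by move=> injf; rewrite /is_square size_map -map_take -map_drop (inj_eq (inj_map injf)).
Qed.

Lemma square_free_map (T U : eqType) (f : T -> U) (w : seq T) :
  injective f -> square_free (map f w) = square_free w.
Proof.
move=> injf; rewrite /square_free size_map; apply: eq_forallb => i.
by apply: eq_forallb => j; rewrite -map_drop -map_take is_square_map.
Qed.

Section SeparatorInsertion.
Variables (T U : finType) (e : T -> U) (z : U).
Hypotheses (e_inj : injective e) (e_neq_z : forall a, e a != z).
Implicit Types (w : seq T) (b : seq bool) (t : seq U).

Fixpoint insert_sep w b : seq U :=
  match w, b with
  | a :: w', bit :: b' => e a :: (if bit then z :: insert_sep w' b' else insert_sep w' b')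
  | _, _ => [::]
  end.

Fixpoint sep_pattern t : seq bool :=
  if t is x :: t' then
    if x == z then sep_pattern t' else prefix [:: z] t' :: sep_pattern t'
  else [::].

Lemma size_insert_sep w b : size w = size b -> size (insert_sep w b) = size b + count id b.
Proof. by elim: w b => [|a w IH] [|[] b] //= [] /IH ->; rewrite ?addnS. Qed.

Lemma filter_insert_sep w b : size w = size b -> filter (predC1 z) (insert_sep w b) = map e w.
Proof.
elim: w b => [|a w IH] [|bit b] //= [] /IH IHb.
by rewrite e_neq_z; case: bit; rewrite /= ?eqxx IHb.
Qed.

Lemma insert_sep_head w b : ~~ prefix [:: z] (insert_sep w b).
Proof. by case: w b => [|a w] [|bit b] //=; rewrite eq_sym (negbTE (e_neq_z a)). Qed.

Lemma sep_pattern_insert_sep w b : size w = size b -> sep_pattern (insert_sep w b) = b.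
Proof.
elim: w b => [|a w IH] [|bit b] //= [] /IH IHb; rewrite (negbTE (e_neq_z a)).
by case: bit; rewrite /= ?eqxx IHb ?prefix0s // (negbTE (insert_sep_head _ _)).
Qed.

Lemma insert_sep_no_double w b : ~~ infix [:: z; z] (insert_sep w b).
Proof.
elim: w b => [|a w IH] [|bit b] //; rewrite /= eq_sym (negbTE (e_neq_z a)) /=.
by case: bit => //; rewrite infix_consl /= eqxx negb_or insert_sep_head IH.
Qed.

(* A square [u ++ u] of [t] erases to a square of the filtered word, so [u] would consist
   of separators only; then [u ++ u] contains [z z]. *)
Lemma square_free_filter_sep t :
  ~~ infix [:: z; z] t -> square_free (filter (predC1 z) t) -> square_free t.
Proof.
move=> no_zz /square_freeP sf_filter; apply/square_freeP => p u q ht.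
have := sf_filter (filter (predC1 z) p) (filter (predC1 z) u) (filter (predC1 z) q).
rewrite ht !filter_cat => /(_ erefl) u_filter.
have /hasPn only_z : ~~ has (predC1 z) u by rewrite has_filter u_filter.
case: u {u_filter} ht only_z => [//|x [|y u]] ht only_z; case/negP: no_zz; rewrite ht.
  by have /= /negbNE/eqP -> := only_z x (mem_head _ _); apply/infixP; exists p, q.
have /= /negbNE/eqP hx := only_z x (mem_head _ _).
have /= /negbNE/eqP hy : ~~ predC1 z y by apply: only_z; rewrite !inE eqxx orbT.
by rewrite hx hy; apply/infixP; exists p, (u ++ [:: z, z & u] ++ q).
Qed.

Lemma sf_count_le_card_sep_fibre n b : size b + count id b = n ->
  sf_count T (size b) <=
    #|[set t in [set t : n.-tuple U | square_free t] | sep_pattern t == b]|.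
Proof.
move=> hn; pose embed (w : (size b).-tuple T) := insubd (nseq_tuple n z) (insert_sep w b).
have val_embed (w : (size b).-tuple T) : val (embed w) = insert_sep w b.
  by rewrite val_insubd size_insert_sep ?size_tuple // hn eqxx.
apply: (@leq_card_in_inj _ _ _ _ embed).
  move=> w1 w2 _ _ /(congr1 val); rewrite !val_embed => /(congr1 (filter (predC1 z))).
  by rewrite !filter_insert_sep ?size_tuple // => /(inj_map e_inj) /val_inj.
move=> w; rewrite !inE val_embed sep_pattern_insert_sep ?size_tuple // eqxx andbT => sfw.
apply: square_free_filter_sep; first exact: insert_sep_no_double.
by rewrite filter_insert_sep ?size_tuple // square_free_map.
Qed.

Lemma sum_sf_count_patterns_le n (bs : seq (seq bool)) :
  uniq bs -> all (fun b => size b + count id b == n) bs ->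
  sumn [seq sf_count T (size b) | b <- bs] <= sf_count U n.
Proof.
move=> ubs /allP hbs; rewrite sumnE big_map.
have := sum_card_fibres_le (fun t : n.-tuple U => sep_pattern t)
  [set t : n.-tuple U | square_free t] ubs.
apply: leq_trans; rewrite [X in X <= _]big_seq [X in _ <= X]big_seq.
by apply: leq_sum => b /hbs /eqP; apply: sf_count_le_card_sep_fibre.
Qed.

End SeparatorInsertion.

(* The patterns of [insert_sep] for words of length [n]: [false] stands for a letter,
   [true] for a letter followed by the separator. *)
Fixpoint sep_patterns n : seq (seq bool) :=
  match n with
  | 0 => [:: [::]]
  | m.+1 =>
    if m is k.+1 then
      [seq rcons b false | b <- sep_patterns m] ++ [seq rcons b true | b <- sep_patterns k]
    else [:: [:: false]]
  end.

Lemma sep_patternsSS n :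
  sep_patterns n.+2 =
    [seq rcons b false | b <- sep_patterns n.+1] ++ [seq rcons b true | b <- sep_patterns n].
Proof. by []. Qed.

Lemma sep_patterns_spec n :
  all (fun b => size b + count id b == n) (sep_patterns n) && uniq (sep_patterns n).
Proof.
suff [] : (all (fun b => size b + count id b == n) (sep_patterns n) && uniq (sep_patterns n))
  /\ (all (fun b => size b + count id b == n.+1) (sep_patterns n.+1)
      && uniq (sep_patterns n.+1)) by [].
elim: n => [|n [/andP [sz1 u1] /andP [sz2 u2]]] //; split; first by apply/andP.
rewrite sep_patternsSS all_cat !all_map cat_uniq !map_inj_uniq ?u1 ?u2; try exact: rcons_injl.
apply/and3P; split => //; first (apply/andP; split).
- apply/allP => b /(allP sz2) /eqP hb /=.
  by rewrite size_rcons -cats1 count_cat /=; lia.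
- apply/allP => b /(allP sz1) /eqP hb /=.
  by rewrite size_rcons -cats1 count_cat /=; lia.
rewrite andbT; apply/hasPn => _ /mapP [b _ ->]; apply/mapP => -[b' _ /(congr1 (last false))].
by rewrite !last_rcons.
Qed.

Lemma sum_omega_sep_patterns_le k n :
  sumn [seq omega_minus (size b) k | b <- sep_patterns n] <= omega_minus n k.+1.
Proof.
have lift_neq_max (a : 'I_k) : lift ord_max a != ord_max by rewrite eq_sym neq_lift.
have /andP [sz u] := sep_patterns_spec n.
exact: (sum_sf_count_patterns_le (@lift_inj _ ord_max) lift_neq_max u sz).
Qed.

Local Open Scope R_scope.

Lemma INR_gt0 n : (0 < n)%N -> 0 < INR n.
Proof. by move=> /ltP; apply: lt_0_INR. Qed.

Lemma INR_leq m n : (m <= n)%N -> INR m <= INR n.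
Proof. by move=> /leP; apply: le_INR. Qed.

Lemma INR_expn m n : INR (m ^ n) = INR m ^ n.
Proof. by elim: n => [|n IH] //=; rewrite expnS mult_INR IH. Qed.

Lemma is_lim_seq_const_div c : is_lim_seq (fun n => c / INR n.+1) 0.
Proof.
have := is_lim_seq_div (fun=> c) INR c p_infty 0 (is_lim_seq_const c) is_lim_seq_INR
  ltac:(by []) (is_Rbar_div_p_infty _).
by move/is_lim_seq_incr_1.
Qed.

Section Fekete.
Variable a : nat -> R.
Hypotheses (a0 : a 0%N = 0) (a_ge0 : forall n, 0 <= a n)
  (a_subadd : forall m n, a (m + n)%N <= a m + a n).

Let ratio n := a n / INR n.

Lemma subadd_mulD t q r : a (t * q + r)%N <= INR t * a q + a r.
Proof.
elim: t => [|t IH]; first by rewrite mul0n add0n /=; lra.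
rewrite mulSn -addnA S_INR; apply: Rle_trans (a_subadd _ _) _; lra.
Qed.

Lemma subadd_le_mul r : a r <= INR r * a 1%N.
Proof. by have := subadd_mulD r 1 0; rewrite muln1 addn0 a0 Rplus_0_r. Qed.

Lemma subadd_ratio_le q n : (0 < q)%N -> (0 < n)%N ->
  ratio n <= ratio q + INR q * a 1%N / INR n.
Proof.
move=> hq hn; have q_gt0 := INR_gt0 hq; have n_gt0 := INR_gt0 hn.
have n_ge : INR (n %/ q) * INR q <= INR n by rewrite -mult_INR; apply: INR_leq; exact: leq_divM.
have r_le : a (n %% q)%N <= INR q * a 1%N.
  apply: Rle_trans (subadd_le_mul _) _; apply: Rmult_le_compat_r => //.
  exact/INR_leq/ltnW/ltn_pmod.
have := subadd_mulD (n %/ q) q (n %% q); rewrite -divn_eq => a_le.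
have ratio_q_ge0 : 0 <= ratio q by apply: Rmult_le_pos => //; apply/Rlt_le/Rinv_0_lt_compat.
have : INR (n %/ q) * a q <= INR n * ratio q.
  have -> : INR (n %/ q) * a q = INR (n %/ q) * INR q * ratio q by rewrite /ratio; field; lra.
  exact: Rmult_le_compat_r.
have -> : ratio q + INR q * a 1%N / INR n = (INR n * ratio q + INR q * a 1%N) / INR n.
  by field; lra.
move=> ?; apply: Rmult_le_compat_r; [exact/Rlt_le/Rinv_0_lt_compat | lra].
Qed.

Lemma fekete_subadditive :
  exists2 L : R, is_lim_seq ratio L & forall n, (0 < n)%N -> L <= ratio n.
Proof.
have ratio_ge0 n : 0 <= ratio n.
  case: n => [|n]; first by rewrite /ratio a0 /Rdiv Rmult_0_l; lra.
  by apply: Rmult_le_pos => //; apply/Rlt_le/Rinv_0_lt_compat/INR_gt0.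
pose v n := Rbar.Finite (ratio n.+1).
have [L hL] : exists L : R, is_inf_seq v L.
  case: (Inf_seq v) (Inf_seq_correct v) => [L | | ] /= hinf; first by exists L.
    by have := hinf (ratio 1%N) 0%N; rewrite /v /=; lra.
  by have [n] := hinf 0; have := ratio_ge0 n.+1; rewrite /v /=; lra.
have L_le n : (0 < n)%N -> L <= ratio n.
  move=> hn; apply: Rnot_lt_le => hlt.
  have [hlow _] := hL (mkposreal _ (proj2 (Rlt_0_minus _ _) hlt)).
  by have := hlow n.-1; rewrite /v prednK //=; lra.
exists L => //; apply/is_lim_seq_spec => eps.
have [_ [q hq]] := hL (pos_div_2 eps); rewrite /v /= in hq.
have /is_lim_seq_spec /(_ (pos_div_2 eps)) [N hN] :=
  is_lim_seq_const_div (INR q.+1 * a 1%N).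
exists N.+1 => n hn; case: n hn => [|n] hn; first lia.
have := hN n ltac:(lia); rewrite Rminus_0_r => hsmall.
have := subadd_ratio_le (ltn0Sn q) (ltn0Sn n); have := L_le n.+1 isT.
have := Rle_abs (INR q.+1 * a 1%N / INR n.+1); rewrite /= in hsmall *.
by move=> habs L_le_n ratio_n_le; apply: Rabs_def1; lra.
Qed.

End Fekete.

Definition sf_words_exist x := forall n, (0 < omega_minus n x)%N.

Lemma omega_minus0 x : omega_minus 0 x = 1%N.
Proof. exact: sf_count0. Qed.

Lemma s_minus_fekete x : sf_words_exist x ->
  is_lim_seq (fun n => ln (INR (omega_minus n x)) / INR n) (s_minus x) /\
  forall n, (0 < n)%N -> s_minus x <= ln (INR (omega_minus n x)) / INR n.
Proof.
move=> hx; pose a n := ln (INR (omega_minus n x)).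
have a0 : a 0%N = 0 by rewrite /a omega_minus0 ln_1.
have a_ge0 n : 0 <= a n by rewrite /a -ln_1; apply: ln_le; [lra | exact: INR_leq (hx n)].
have a_subadd m n : a (m + n)%N <= a m + a n.
  rewrite /a -ln_mult; try exact: INR_gt0.
  apply: ln_le; first exact: INR_gt0.
  by rewrite -mult_INR; apply/INR_leq/sf_countD_le.
have [L hL L_le] := fekete_subadditive a0 a_ge0 a_subadd.
by rewrite /s_minus (is_lim_seq_unique _ _ hL).
Qed.

Lemma omega_minusS_le x n : (omega_minus n.+1 x <= x.-1 ^ n * x)%N.
Proof.
elim: n => [|n IH]; first by rewrite expn0 mul1n (leq_trans (max_card _)) // card_tuple card_ord.
apply: leq_trans (sf_countSS_le _ _) _.
by rewrite card_ord expnS -mulnA leq_mul2l IH orbT.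
Qed.

Lemma s_minus_le_ln_pred x : (2 <= x)%N -> sf_words_exist x -> s_minus x <= ln (INR x.-1).
Proof.
move=> hx2 hx; have [/is_lim_seq_incr_1 hlim _] := s_minus_fekete hx.
have x1_gt0 : 0 < INR x.-1 by apply: INR_gt0; lia.
have x_gt0 : 0 < INR x by apply: INR_gt0; lia.
pose c := ln (INR x) - ln (INR x.-1).
have hbound : is_lim_seq (fun n => ln (INR x.-1) + c / INR n.+1) (ln (INR x.-1)).
  have := is_lim_seq_plus' _ _ _ _ (is_lim_seq_const (ln (INR x.-1))) (is_lim_seq_const_div c).
  by rewrite Rplus_0_r.
apply: (is_lim_seq_le _ _ (s_minus x) (ln (INR x.-1)) _ hlim hbound) => n.
have n_gt0 : 0 < INR n.+1 := INR_gt0 (ltn0Sn n).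
have -> : ln (INR x.-1) + c / INR n.+1 = (INR n * ln (INR x.-1) + ln (INR x)) / INR n.+1.
  by rewrite /c S_INR; field; rewrite -S_INR; lra.
apply: Rmult_le_compat_r; first exact/Rlt_le/Rinv_0_lt_compat.
rewrite -ln_pow // -ln_mult //; last exact: pow_lt.
apply: ln_le; first exact: INR_gt0.
by rewrite -INR_expn -mult_INR; apply/INR_leq/omega_minusS_le.
Qed.

Lemma ln_le_s_minus x A mu : 0 < A -> 0 < mu -> sf_words_exist x ->
  (forall n, A * mu ^ n <= INR (omega_minus n x)) -> ln mu <= s_minus x.
Proof.
move=> A_gt0 mu_gt0 hx hA; have [/is_lim_seq_incr_1 hlim _] := s_minus_fekete hx.
have hbound : is_lim_seq (fun n => ln mu + ln A / INR n.+1) (ln mu).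
  have := is_lim_seq_plus' _ _ _ _ (is_lim_seq_const (ln mu)) (is_lim_seq_const_div (ln A)).
  by rewrite Rplus_0_r.
apply: (is_lim_seq_le _ _ (ln mu) (s_minus x) _ hbound hlim) => n.
have n_gt0 : 0 < INR n.+1 := INR_gt0 (ltn0Sn n).
have -> : ln mu + ln A / INR n.+1 = (ln A + INR n.+1 * ln mu) / INR n.+1 by field; lra.
apply: Rmult_le_compat_r; first exact/Rlt_le/Rinv_0_lt_compat.
rewrite -ln_pow // -ln_mult //; last exact: pow_lt.
by apply: ln_le; [apply: Rmult_lt_0_compat => //; exact: pow_lt | exact: hA].
Qed.

Lemma exp_le x y : x <= y -> exp x <= exp y.
Proof. by case=> [/exp_increasing /Rlt_le | ->]; [| apply: Rle_refl]. Qed.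

Lemma exp_s_minus_pow_le x : sf_words_exist x ->
  forall m, exp (s_minus x) ^ m <= INR (omega_minus m x).
Proof.
move=> hx [|m]; first by rewrite omega_minus0 /=; lra.
have [_ /(_ m.+1 isT) hle] := s_minus_fekete hx.
have m_gt0 : 0 < INR m.+1 := INR_gt0 (ltn0Sn m).
rewrite -[exp _ ^ _]exp_ln ?ln_pow ?ln_exp; try exact/pow_lt/exp_pos; last exact: exp_pos.
rewrite -(exp_ln (INR (omega_minus m.+1 x))); last exact: INR_gt0.
apply: exp_le; rewrite Rmult_comm; apply: (Rmult_le_reg_r (/ INR m.+1)).
  exact: Rinv_0_lt_compat.
by rewrite Rmult_assoc Rinv_r ?Rmult_1_r; [exact: hle | lra].
Qed.

Definition sumR (l : seq R) := foldr Rplus 0 l.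

Lemma sumR_cat l1 l2 : sumR (l1 ++ l2) = sumR l1 + sumR l2.
Proof. by elim: l1 => /= [|r l IH]; rewrite ?IH; lra. Qed.

Lemma sumR_mull (I : Type) c (f : I -> R) l :
  sumR [seq c * f i | i <- l] = c * sumR [seq f i | i <- l].
Proof. by elim: l => /= [|i l IH]; rewrite ?IH; lra. Qed.

Lemma sumR_le_sumn (I : Type) (g : I -> R) (f : I -> nat) l :
  (forall i, g i <= INR (f i)) -> sumR [seq g i | i <- l] <= INR (sumn [seq f i | i <- l]).
Proof.
move=> hgf; elim: l => /= [|i l IH]; first lra.
by rewrite plus_INR; apply: Rplus_le_compat.
Qed.

Definition pattern_weight lam n := sumR [seq lam ^ size b | b <- sep_patterns n].

Lemma pattern_weightSS lam n :
  pattern_weight lam n.+2 = lam * (pattern_weight lam n.+1 + pattern_weight lam n).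
Proof.
rewrite /pattern_weight sep_patternsSS map_cat sumR_cat -!map_comp.
under eq_map do rewrite /= size_rcons.
under [X in _ + sumR X = _]eq_map do rewrite /= size_rcons.
by rewrite /= !sumR_mull; ring.
Qed.

(* The weight satisfies [W (n + 2) = lam (W (n + 1) + W n)], so it grows like
   [mu ^ n] for any [mu] with [mu ^ 2 <= lam (mu + 1)]; with [mu = lam (1 + t)] this is
   the hypothesis on [t]. *)
Lemma pattern_weight_ge lam t : 0 < lam -> 0 <= t -> lam * t * (1 + t) <= 1 ->
  forall n, (lam * (1 + t)) ^ n <= (1 + t) * pattern_weight lam n.
Proof.
move=> lam_gt0 t_ge0 ht n; set mu := lam * (1 + t).
suff [] : mu ^ n <= (1 + t) * pattern_weight lam n
       /\ mu ^ n.+1 <= (1 + t) * pattern_weight lam n.+1 by [].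
elim: n => [|n [IH1 IH2]]; first by rewrite /pattern_weight /mu /=; lra.
split => //; rewrite pattern_weightSS.
have mu_n_ge0 : 0 <= mu ^ n by apply: pow_le; rewrite /mu; nra.
have mu2 : mu * mu <= lam * (mu + 1) by rewrite /mu; nra.
have : mu ^ n.+2 <= lam * (mu ^ n.+1 + mu ^ n).
  have -> : mu ^ n.+2 = mu ^ n * (mu * mu) by rewrite /=; ring.
  have -> : lam * (mu ^ n.+1 + mu ^ n) = mu ^ n * (lam * (mu + 1)) by rewrite /=; ring.
  exact: Rmult_le_compat_l.
nra.
Qed.

Lemma pattern_weight_le_omega k lam : (forall m, lam ^ m <= INR (omega_minus m k)) ->
  forall n, pattern_weight lam n <= INR (omega_minus n k.+1).
Proof.
move=> hlam n; apply: Rle_trans (@sumR_le_sumn _ (fun b => lam ^ size b)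
  (fun b => omega_minus (size b) k) _ (fun b => hlam (size b))) _.
exact/INR_leq/sum_omega_sep_patterns_le.
Qed.

Lemma s_minus_succ k : (2 <= k)%N -> sf_words_exist k ->
  sf_words_exist k.+1 /\ s_minus k + ln (1 + / INR k) <= s_minus k.+1.
Proof.
move=> hk hx; set lam := exp (s_minus k); set t := / INR k.
have k_ge2 : 2 <= INR k by have := INR_leq hk.
have t_gt0 : 0 < t by apply: Rinv_0_lt_compat; lra.
have kt : INR k * t = 1 by rewrite /t Rinv_r; lra.
have lam_gt0 : 0 < lam := exp_pos _.
have lam_le : lam <= INR k - 1.
  have -> : INR k - 1 = INR k.-1 by rewrite -(prednK (ltnW hk)) S_INR /=; lra.
  rewrite /lam -(exp_ln (INR k.-1)); last by apply: INR_gt0; lia.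
  exact/exp_le/s_minus_le_ln_pred.
have ht : lam * t * (1 + t) <= 1.
  have : (INR k - 1) * t * (1 + t) = 1 - t * t.
    by rewrite Rmult_minus_distr_r kt; ring.
  have : lam * t * (1 + t) <= (INR k - 1) * t * (1 + t).
    by apply: Rmult_le_compat_r; [lra | apply: Rmult_le_compat_r; lra].
  nra.
have lower n : / (1 + t) * (lam * (1 + t)) ^ n <= INR (omega_minus n k.+1).
  apply: (Rmult_le_reg_l (1 + t)); first lra.
  rewrite -Rmult_assoc Rinv_r ?Rmult_1_l; last lra.
  apply: Rle_trans (pattern_weight_ge lam_gt0 (Rlt_le _ _ t_gt0) ht n) _.
  apply: Rmult_le_compat_l; first lra.
  exact/pattern_weight_le_omega/exp_s_minus_pow_le.
have scale_gt0 : 0 < / (1 + t) by apply: Rinv_0_lt_compat; lra.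
have mu_gt0 : 0 < lam * (1 + t) by nra.
have hx' : sf_words_exist k.+1.
  move=> n; apply/ltP/INR_lt; apply: Rlt_le_trans (lower n); rewrite /=.
  by apply: Rmult_lt_0_compat => //; exact: pow_lt.
split => //; have := ln_le_s_minus scale_gt0 mu_gt0 hx' lower.
by rewrite ln_mult ?ln_exp //; lra.
Qed.

Lemma ln2_div_le_ln_1_plus_inv k : (0 < k)%N -> ln 2 / INR k <= ln (1 + / INR k).
Proof.
move=> hk; have k_gt0 := INR_gt0 hk.
have bernoulli := poly k (/ INR k) (Rinv_0_lt_compat _ k_gt0).
rewrite Rinv_r in bernoulli; last lra.
apply: (Rmult_le_reg_l (INR k)) => //.
have -> : INR k * (ln 2 / INR k) = ln 2 by field; lra.
rewrite -ln_pow; last by have := Rinv_0_lt_compat _ k_gt0; lra.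
by apply: ln_le; lra.
Qed.

Lemma s_minus_succ_ge k : (2 <= k)%N -> sf_words_exist k ->
  sf_words_exist k.+1 /\ s_minus k + ln 2 / INR k <= s_minus k.+1.
Proof.
move=> hk hx; have [hx' hs] := s_minus_succ hk hx; split => //.
by have := ln2_div_le_ln_1_plus_inv (ltnW hk); lra.
Qed.

(* Eventually [omega_n = 0], and the normalised logarithms vanish because [ln 0 = 0]. *)
Lemma s_minus_eq0 x : ~ sf_words_exist x -> s_minus x = 0.
Proof.
move=> /not_all_ex_not [N /negP]; rewrite -eqn0Ngt => /eqP hN.
have omega_eq0 n : (N <= n)%N -> omega_minus n x = 0%N.
  move=> hn; apply/eqP; rewrite -leqn0 -(subnKC hn).
  apply: leq_trans (sf_countD_le _ _ _) _.
  by change (omega_minus N x * omega_minus (n - N) x <= 0)%N; rewrite hN.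
have ln0 : ln 0 = 0 by rewrite /ln; case: Rlt_dec => // h; case: (Rlt_irrefl _ h).
have : is_lim_seq (fun n => ln (INR (omega_minus n x)) / INR n) 0.
  apply: (is_lim_seq_ext_loc (fun=> 0)); last exact: is_lim_seq_const.
  by exists N => n /leP hn; rewrite omega_eq0 //= ln0 /Rdiv Rmult_0_l.
by rewrite /s_minus => /is_lim_seq_unique ->.
Qed.

(* The second case cannot occur (Thue), but it is cheaper to handle than to exclude. *)
Lemma s_minus4_ge : sf_words_exist 4 /\ s_minus 3 + ln 2 / INR 3 <= s_minus 4.
Proof.
have exp2 n : (2 ^ n <= omega_minus n 4)%N by apply: sf_count_ge_exp2; rewrite card_ord.
have hx4 : sf_words_exist 4 by move=> n; apply: leq_trans (exp2 n); rewrite expn_gt0.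
split => //; case: (classic (sf_words_exist 3)) => hx3.
  by have [_] := s_minus_succ_ge (isT : (2 <= 3)%N) hx3.
have ln2_le : ln 2 <= s_minus 4.
  apply: (ln_le_s_minus Rlt_0_1 Rlt_0_2 hx4) => n.
  by rewrite Rmult_1_l -[2]/(INR 2) -INR_expn; exact: INR_leq.
have ln2_gt0 : 0 < ln 2 by rewrite -ln_1; apply: ln_increasing; lra.
rewrite s_minus_eq0 //= /Rdiv; nra.
Qed.

Lemma s_minus_ge_harmonic k : (4 <= k)%N ->
  sf_words_exist k /\ s_minus 3 + ln 2 * sum_n_m (fun i => / INR i) 3 k.-1 <= s_minus k.
Proof.
elim: k => // k IH; rewrite ltnS leq_eqVlt => /orP [/eqP <- | hk].
  by rewrite sum_n_n; exact: s_minus4_ge.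
have [hx IHs] := IH hk; have [hx' hs] := s_minus_succ_ge (ltnW (ltnW hk)) hx.
have k_gt0 : (0 < k)%N by lia.
split => //; rewrite /= -[X in sum_n_m _ _ X](prednK k_gt0) sum_n_Sm; last lia.
rewrite prednK // /plus /= Rmult_plus_distr_l; rewrite /Rdiv in hs; lra.
Qed.

Theorem theorem2 (x : nat) (hx : (3 < x)%N) :
  let eps := s_minus 3 in
  (eps + ln 2 * sum_n_m (fun k => / INR k) 3 (x - 1)%N <= s_minus x
   /\ s_minus x <= ln (INR (x - 1)%N))%R.
Proof.
have [hx_exist lower] := s_minus_ge_harmonic hx.
rewrite subn1; split => //.
by apply: s_minus_le_ln_pred; [exact: ltnW (ltnW hx) | exact: hx_exist].
Qed.
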